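(* Let $N\ge1$ and let $A$ be an $(N+1)\times N$ complex matrix such that any set of $N$ rows of $A$ is linearly independent. Then the $N(N+1)\times N(N+1)$ matrix $$\hat A=\big[\, I_N\otimes A \ \ \ [D(A)]_{:,\{2,\dots,N+1\}}\,\big]$$ has full rank.
   Context: For a $K\times L$ matrix $B$ with entries $b_{ij}$, $D(B)$ denotes the $KL\times K$ matrix obtained by stacking vertically the diagonal matrices $\mathrm{diag}(b_{11},\dots,b_{K1}),\ \mathrm{diag}(b_{12},\dots,b_{K2}),\dots,\mathrm{diag}(b_{1L},\dots,b_{KL})$ (one $K\times K$ diagonal matrix per column of $B$). For a matrix $B$, $[B]_{:,\mathcal{S}}$ denotes the submatrix consisting of the columns indexed by $\mathcal{S}$. $\otimes$ is the Kronecker product. *)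

From HB Require Import structures.
From mathcomp Require Import all_boot all_order all_algebra.
Set Implicit Arguments. Unset Strict Implicit. Unset Printing Implicit Defensive.
Import GRing.Theory Num.Theory.
Local Open Scope ring_scope.

(* Entry of a matrix at natural-number indices (0 when out of range). *)
Definition natmx (R : nzRingType) m n (A : 'M[R]_(m, n)) (i j : nat) : R :=
  match (insub i : option 'I_m), (insub j : option 'I_n) with
  | Some i', Some j' => A i' j'
  | _, _ => 0
  end.

(* Kronecker product A ⊗ B (0-based indices):
   (A ⊗ B)_{i*m2 + k, j*n2 + l} = A_{i j} * B_{k l}. *)
Definition kron (R : nzRingType) m1 n1 m2 n2
    (A : 'M[R]_(m1, n1)) (B : 'M[R]_(m2, n2)) : 'M[R]_(m1 * m2, n1 * n2) :=
  \matrix_(r, c) (natmx A (r %/ m2)%N (c %/ n2)%N * natmx B (r %% m2)%N (c %% n2)%N).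

(* D(B) for B : K x L: the KL x K matrix stacking diag(b_{1l},...,b_{Kl}),
   l = 1..L.  Row l*K + k (0-based, l < L, k < K), column c has entry
   b_{k l} if k = c and 0 otherwise. *)
Definition Dmx (R : nzRingType) K L (B : 'M[R]_(K, L)) : 'M[R]_(K * L, K) :=
  \matrix_(r, c) (if (r %% K)%N == (c : nat) then natmx B (r %% K)%N (r %/ K)%N else 0).

(* (N * (N+1) rows and N(N+1) = N*N + N rows are identified via mulnC.) *)
Definition Ahat (R : nzRingType) N (A : 'M[R]_(N.+1, N)) : 'M[R]_(N.+1 * N, N * N + N) :=
  row_mx (castmx (mulnC N N.+1, erefl (N * N)%N) (kron (1%:M : 'M[R]_N) A)) (colsub (fun j : 'I_N => lift ord0 j) (Dmx A)).

(* A vector of the kernel of [Ahat A] splits as (x, y), x of length N^2 and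
   y of length N; let X be the N x N matrix whose columns are the consecutive
   blocks of x.  The kernel equation reads A X + diag(0, y) A = 0.  Split A
   into its first row a and the square block B of its other rows, which is
   invertible: a X = 0 and B X = - diag(y) B.  Writing a = c B, no coordinate
   of c vanishes, for c_i = 0 would put a in the span of N - 1 rows of B.
   Hence c diag(y) B = - a X = 0, so c diag(y) = 0 and y = 0; then B X = 0
   and X = 0. *)

From HB Require Import structures.
From mathcomp Require Import all_boot all_order all_algebra.
Set Implicit Arguments. Unset Strict Implicit. Unset Printing Implicit Defensive.
Import GRing.Theory Num.Theory.
Local Open Scope ring_scope.

Section OrdPair.
Variables p q : nat.

Lemma ord_pair_subproof (i : 'I_p) (j : 'I_q) : (i * q + j < p * q)%N.
Proof.
apply: (@leq_trans (i.+1 * q)); first by rewrite mulSnr ltn_add2l.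
by rewrite leq_mul2r ltn_ord orbT.
Qed.

Definition ord_pair (i : 'I_p) (j : 'I_q) : 'I_(p * q) :=
  Ordinal (ord_pair_subproof i j).

Lemma ord_pair_div (i : 'I_p) (j : 'I_q) : (ord_pair i j %/ q)%N = i.
Proof. by rewrite divnMDl ?divn_small ?addn0 // (leq_ltn_trans _ (ltn_ord j)). Qed.

Lemma ord_pair_mod (i : 'I_p) (j : 'I_q) : (ord_pair i j %% q)%N = j.
Proof. by rewrite modnMDl modn_small. Qed.

Lemma ord_pair_surj (c : 'I_(p * q)) : exists i j, c = ord_pair i j.
Proof.
have : (0 < p * q)%N by apply: leq_ltn_trans (ltn_ord c).
rewrite muln_gt0 => /andP[_ q_gt0].
have c_div : (c %/ q < p)%N by rewrite ltn_divLR.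
exists (Ordinal c_div), (Ordinal (ltn_pmod c q_gt0)).
by apply: val_inj; rewrite /= -divn_eq.
Qed.

Lemma big_ord_pair (R : nmodType) (F : 'I_(p * q) -> R) :
  \sum_(c < p * q) F c = \sum_(i < p) \sum_(j < q) F (ord_pair i j).
Proof.
pose G n := if insub n is Some c then F c else 0.
have FG c : F c = G c by rewrite /G valK.
under eq_bigr do rewrite FG.
rewrite -(big_mkord xpredT G) big_nat_mul big_mkord; apply: eq_bigr => i _.
rewrite -{1}[(i * q)%N]add0n big_addn mulSnr addKn big_mkord; apply: eq_bigr => j _.
by rewrite FG addnC.
Qed.

End OrdPair.

Lemma natmx_ord (R : nzRingType) m n (A : 'M[R]_(m, n)) (i : 'I_m) (j : 'I_n) :
  natmx A i j = A i j.
Proof. by rewrite /natmx !valK. Qed.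

Lemma kron_ord_pair (R : nzRingType) m1 n1 m2 n2
    (A : 'M[R]_(m1, n1)) (B : 'M[R]_(m2, n2)) i j k l :
  kron A B (ord_pair i k) (ord_pair j l) = A i j * B k l.
Proof. by rewrite mxE !ord_pair_div !ord_pair_mod !natmx_ord. Qed.

Lemma Dmx_ord_pair (R : nzRingType) K L (B : 'M[R]_(K, L)) l k c :
  Dmx B (cast_ord (mulnC L K) (ord_pair l k)) c = if k == c then B k l else 0.
Proof.
by rewrite mxE /= ord_pair_mod ord_pair_div natmx_ord (inj_eq val_inj).
Qed.

Definition vec_cols (R : Type) p q (x : 'rV[R]_(p * q)) : 'M[R]_(q, p) :=
  \matrix_(j, i) x 0 (ord_pair i j).

Lemma vec_cols_eq0 (R : nmodType) p q (x : 'rV[R]_(p * q)) :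
  vec_cols x = 0 -> x = 0.
Proof.
move=> /matrixP x0; apply/rowP => c; have [i [j ->]] := ord_pair_surj c.
by have := x0 j i; rewrite !mxE.
Qed.

Lemma mul_tr_kron1 (R : comNzRingType) p m n (A : 'M[R]_(m, n))
    (x : 'rV[R]_(p * n)) l k :
  (x *m (kron (1%:M : 'M_p) A)^T) 0 (ord_pair l k) = (A *m vec_cols x) k l.
Proof.
rewrite !mxE big_ord_pair (bigD1 l) //= [X in _ + X]big1 ?addr0 => [|j jl].
  apply: eq_bigr => j _.
  by rewrite [_^T _ _]mxE kron_ord_pair !mxE eqxx mul1r mulrC.
apply: big1 => i _.
by rewrite [_^T _ _]mxE kron_ord_pair mxE eq_sym (negbTE jl) mul0r mulr0.
Qed.

Lemma mul_tr_Dmx (R : nzRingType) K L (B : 'M[R]_(K, L)) (w : 'rV[R]_K) l k :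
  (w *m (Dmx B)^T) 0 (cast_ord (mulnC L K) (ord_pair l k)) = w 0 k * B k l.
Proof.
rewrite mxE (bigD1 k) //= big1 ?addr0 => [|c ck]; rewrite mxE Dmx_ord_pair.
  by rewrite eqxx.
by rewrite eq_sym (negbTE ck) mulr0.
Qed.

Lemma mul_tr_colsub_lift0 (R : nzRingType) m n (M : 'M[R]_(m, n.+1)) (y : 'rV[R]_n) :
  y *m (colsub (lift ord0) M)^T = row_mx (0 : 'rV_1) y *m M^T.
Proof.
apply/rowP => r; rewrite !mxE big_ord_recl.
have -> : row_mx (0 : 'rV_1) y 0 ord0 = 0.
  rewrite (_ : ord0 = lshift n (ord0 : 'I_1) :> 'I_n.+1) ?row_mxEl ?mxE //.
  exact: val_inj.
rewrite mul0r add0r; apply: eq_bigr => i _.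
by rewrite -rshift1 row_mxEr !mxE rshift1.
Qed.

Lemma mul_tr_AhatE (R : comNzRingType) N (A : 'M[R]_(N.+1, N))
    (u : 'rV[R]_(N * N + N)) l k :
  (u *m (Ahat A)^T) 0 (cast_ord (mulnC N N.+1) (ord_pair l k)) =
  (A *m vec_cols (lsubmx u) + diag_mx (row_mx (0 : 'rV_1) (rsubmx u)) *m A) k l.
Proof.
rewrite -{1}(hsubmxK u) /Ahat tr_row_mx mul_row_col mul_tr_colsub_lift0.
rewrite {1}mxE mul_tr_Dmx mul_diag_mx [RHS]mxE -mul_tr_kron1.
congr (_ + _); last by rewrite !mxE.
rewrite trmx_cast [LHS]mxE [RHS]mxE; apply: eq_bigr => c _.
by rewrite castmxE cast_ord_id cast_ordK.
Qed.

Lemma diag_eq0_of_coords (F : fieldType) n (B X : 'M[F]_n) (c y : 'rV[F]_n) :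
    B \in unitmx -> (forall i, c 0 i != 0) -> c *m B *m X = 0 ->
  B *m X + diag_mx y *m B = 0 -> y = 0.
Proof.
move=> B_unit c_neq0 cBX /eqP; rewrite addrC addr_eq0 => /eqP yB.
have cy0 : c *m diag_mx y = 0.
  apply: (row_free_inj (A := B)); first by rewrite row_free_unit.
  by rewrite mul0mx -mulmxA yB mulmxN mulmxA cBX oppr0.
apply/rowP => i; move/rowP: cy0 => /(_ i); rewrite mul_mx_diag !mxE.
by move/eqP; rewrite mulf_eq0 (negbTE (c_neq0 i)) => /eqP.
Qed.

Section RowCoordinates.
Variables (F : fieldType) (n : nat) (A : 'M[F]_(1 + n, n)).
Hypothesis A_rows_free :
  forall f : 'I_n -> 'I_(1 + n), injective f -> row_free (rowsub f A).

Lemma dsubmx_unit : dsubmx A \in unitmx.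
Proof.
rewrite -row_free_unit (_ : dsubmx A = rowsub (@rshift 1 n) A).
  exact/A_rows_free/rshift_inj.
by apply/matrixP => i j; rewrite !mxE.
Qed.

Lemma coords_usubmx_neq0 i0 : (usubmx A *m invmx (dsubmx A)) 0 i0 != 0.
Proof.
have := mulmxKV dsubmx_unit (usubmx A).
move: (usubmx A *m _) => c cB; apply/eqP => c0.
pose f i := if i == i0 then lshift n ord0 else rshift 1 i.
have f_inj : injective f.
  move=> i j; rewrite /f; case: (i =P i0) => [-> | _]; case: (j =P i0) => [-> | _] //.
  exact: rshift_inj.
have cf : c *m rowsub f A = usubmx A.
  rewrite -cB; apply/rowP => j; rewrite !mxE; apply: eq_bigr => i _.
  by rewrite !mxE /f; case: eqVneq => [-> | //]; rewrite c0 !mul0r.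
have : (c - 'e_i0) *m rowsub f A = 0 *m rowsub f A.
  rewrite mul0mx mulmxBl cf -rowE row_rowsub /f eqxx.
  by apply/eqP; rewrite subr_eq0; apply/eqP/rowP => j; rewrite !mxE.
move/(row_free_inj (A_rows_free f_inj))/rowP/(_ i0)/eqP.
by rewrite !mxE !eqxx c0 sub0r oppr_eq0 oner_eq0.
Qed.

Lemma rows_free_kernel_eq0 (X : 'M[F]_n) (y : 'rV[F]_n) :
  A *m X + diag_mx (row_mx (0 : 'rV_1) y) *m A = 0 -> y = 0 /\ X = 0.
Proof.
rewrite -[A]vsubmxK mul_col_mx diag_mx_row mul_block_col add_col_mx.
rewrite linear0 !mul0mx !add0r addr0 => /eqP; rewrite col_mx_eq0.
case/andP=> /eqP aX /eqP BX.
have y0 : y = 0.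
  apply: (diag_eq0_of_coords dsubmx_unit coords_usubmx_neq0 _ BX).
  by rewrite mulmxKV ?dsubmx_unit.
split=> //; move: BX; rewrite y0 linear0 mul0mx addr0 => BX.
by rewrite -[X](mulKmx dsubmx_unit) BX mulmx0.
Qed.

End RowCoordinates.

Lemma row_free_tr_Ahat (F : fieldType) N (A : 'M[F]_(N.+1, N)) :
    (forall f : 'I_N -> 'I_N.+1, injective f -> row_free (rowsub f A)) ->
  row_free (Ahat A)^T.
Proof.
move=> A_rows_free; rewrite -kermx_eq0; apply/eqP/row_matrixP => i.
have : row i (kermx (Ahat A)^T) *m (Ahat A)^T = 0 by rewrite -row_mul mulmx_ker row0.
move: (row i _) => u u0.
have E : A *m vec_cols (lsubmx u) + diag_mx (row_mx (0 : 'rV_1) (rsubmx u)) *m A = 0.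
  by apply/matrixP => k l; rewrite -mul_tr_AhatE u0 !mxE.
have [y0 X0] := rows_free_kernel_eq0 A_rows_free E.
by rewrite row0 -[u]hsubmxK y0 (vec_cols_eq0 X0) row_mx0.
Qed.

Theorem lemma3 (C : numClosedFieldType) (N : nat) (hN : (0 < N)%N)
  (A : 'M[C]_(N.+1, N))
  (hA : forall f : 'I_N -> 'I_N.+1, injective f -> row_free (rowsub f A)) :
  \rank (Ahat A) = (N * N.+1)%N.
Proof. by rewrite -mxrank_tr (eqP (row_free_tr_Ahat hA)) mulnS addnC. Qed.
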